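(* Let $m$ be odd, $\Omega\subseteq\mathbb R^m$ open, and $f\in\mathcal C^4(\Omega;\mathbb R_{0,m})$. Suppose $f$ is harmonic in $\Omega$ (respectively, inframonogenic in $\Omega$). Then $f$ is also inframonogenic (respectively, harmonic) in $\Omega$ if and only if any one of the following holds: (i) $\partial_{\underline x}^3\big(f(\underline x)\underline x\big)=0$ in $\Omega$; (ii) $\big(\underline xf(\underline x)\big)\partial_{\underline x}^3=0$ in $\Omega$; (iii) $\Delta_{\underline x}^2\big(\underline xf(\underline x)\underline x\big)=0$ in $\Omega$.
   Context: $\mathbb R_{0,m}$ is the $2^m$-dimensional real Clifford algebra generated by the orthonormal basis $e_1,\dots,e_m$ of $\mathbb R^m$ with relations $e_je_k+e_ke_j=-2\delta_{jk}$. A point of $\mathbb R^m$ is identified with $\underline x=\sum_j x_je_j$. The Dirac operator $\partial_{\underline x}=\sum_j e_j\partial_{x_j}$ acts from the left, $\partial_{\underline x}f=\sum_j e_j\partial_{x_j}f$, or from the right, $f\partial_{\underline x}=\sum_j(\partial_{x_j}f)e_j$; powers denote iterated application on the same side. $f\in\mathcal C^2$ is inframonogenic if $\partial_{\underline x}f\partial_{\underline x}=\sum_{i,j}e_i(\partial_{x_i}\partial_{x_j}f)e_j=0$. $\Delta_{\underline x}=\sum_j\partial_{x_j}^2$. *)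

From Stdlib Require Import Reals ClassicalEpsilon.
From HB Require Import structures.
From mathcomp Require Import all_boot.
Set Implicit Arguments. Unset Strict Implicit. Unset Printing Implicit Defensive.

HB.instance Definition _ := Monoid.isComLaw.Build R R0 Rplus (fun a b c => esym (Rplus_assoc a b c)) Rplus_comm Rplus_0_l.

Local Open Scope R_scope.

Definition point (m : nat) := 'I_m -> R.

(* The Clifford algebra R_{0,m}: real coefficients on the basis blades
   e_A, A subset of {0..m-1} (e_A = e_{a1} ... e_{ak}, a1 < ... < ak). *)
Definition Cl (m : nat) := {set 'I_m} -> R.

Definition clzero (m : nat) (a : Cl m) : Prop := forall A, a A = 0.

Definition symdiff (m : nat) (A B : {set 'I_m}) : {set 'I_m} := (A :\: B) :|: (B :\: A).

(* e_A e_B = (-1)^(#{(i,k): i in A, k in B, k < i} + |A cap B|) e_{A symdiff B},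
   using e_i e_k = - e_k e_i (i <> k) and e_i^2 = -1. *)
Definition blade_sign (m : nat) (A B : {set 'I_m}) : R :=
  (-1) ^ (#|[set p : 'I_m * 'I_m | (p.1 \in A) && (p.2 \in B) && (p.2 < p.1)%N]|
          + #|A :&: B|)%N.

Definition clmul (m : nat) (a b : Cl m) : Cl m := fun C =>
  \big[Rplus/0]_(A : {set 'I_m}) (a A * b (symdiff A C) * blade_sign A (symdiff A C)).

Definition gen (m : nat) (j : 'I_m) : Cl m := fun C => if C == [set j] then 1 else 0.

Definition vec (m : nat) (x : point m) : Cl m := fun C =>
  \big[Rplus/0]_(j : 'I_m) (x j * gen j C).

Definition upd (m : nat) (x : point m) (j : 'I_m) (t : R) : point m :=
  fun i => if i == j then t else x i.

(* Partial derivative d/dx_j, componentwise (the derivative when it exists;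
   an unspecified value otherwise). *)
Definition pd (m : nat) (j : 'I_m) (f : point m -> Cl m) : point m -> Cl m :=
  fun x C => epsilon (inhabits 0)
    (fun l => derivable_pt_lim (fun t => f (upd x j t) C) (x j) l).

(* Iterated partial derivative: pds [:: j1; ...; jk] f = d_j1 (... (d_jk f)). *)
Fixpoint pds (m : nat) (l : seq 'I_m) (f : point m -> Cl m) : point m -> Cl m :=
  match l with
  | [::] => f
  | j :: l' => pd j (pds l' f)
  end.

Definition open_Rm (m : nat) (Om : point m -> Prop) : Prop :=
  forall x, Om x -> exists r, 0 < r /\
    forall y : point m, (forall i, Rabs (y i - x i) < r) -> Om y.

Definition cont_at_Rm (m : nat) (g : point m -> R) (x : point m) : Prop :=
  forall eps, 0 < eps -> exists delta, 0 < delta /\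
    forall y : point m, (forall i, Rabs (y i - x i) < delta) -> Rabs (g y - g x) < eps.

Definition Ck (m k : nat) (Om : point m -> Prop) (f : point m -> Cl m) : Prop :=
  (forall (l : seq 'I_m) (j : 'I_m) C x, (size l < k)%N -> Om x ->
     derivable_pt_lim (fun t => pds l f (upd x j t) C) (x j) (pds (j :: l) f x C))
  /\ (forall (l : seq 'I_m) C x, (size l <= k)%N -> Om x ->
     cont_at_Rm (fun y => pds l f y C) x).

Definition lap (m : nat) (f : point m -> Cl m) : point m -> Cl m := fun x C =>
  \big[Rplus/0]_(j : 'I_m) pd j (pd j f) x C.

Definition diracL (m : nat) (f : point m -> Cl m) : point m -> Cl m := fun x C =>
  \big[Rplus/0]_(j : 'I_m) clmul (gen j) (pd j f x) C.
Definition diracR (m : nat) (f : point m -> Cl m) : point m -> Cl m := fun x C =>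
  \big[Rplus/0]_(j : 'I_m) clmul (pd j f x) (gen j) C.

Definition harmonic (m : nat) (Om : point m -> Prop) (f : point m -> Cl m) : Prop :=
  forall x, Om x -> clzero (lap f x).

Definition inframonogenic (m : nat) (Om : point m -> Prop) (f : point m -> Cl m) : Prop :=
  forall x, Om x -> clzero (fun C =>
    \big[Rplus/0]_(i : 'I_m) \big[Rplus/0]_(j : 'I_m)
       clmul (clmul (gen i) (pd i (pd j f) x)) (gen j) C).

Definition f_x (m : nat) (f : point m -> Cl m) : point m -> Cl m :=
  fun x => clmul (f x) (vec x).
Definition x_f (m : nat) (f : point m -> Cl m) : point m -> Cl m :=
  fun x => clmul (vec x) (f x).
Definition x_f_x (m : nat) (f : point m -> Cl m) : point m -> Cl m :=
  fun x => clmul (clmul (vec x) (f x)) (vec x).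

Definition vanishes_on (m : nat) (Om : point m -> Prop) (g : point m -> Cl m) : Prop :=
  forall x, Om x -> clzero (g x).

Definition cond_i (m : nat) Om (f : point m -> Cl m) :=
  vanishes_on Om (diracL (diracL (diracL (f_x f)))).
Definition cond_ii (m : nat) Om (f : point m -> Cl m) :=
  vanishes_on Om (diracR (diracR (diracR (x_f f)))).
Definition cond_iii (m : nat) Om (f : point m -> Cl m) :=
  vanishes_on Om (lap (lap (x_f_x f))).

From Stdlib Require Import Reals.
From mathcomp Require Import all_boot.
From Stdlib Require Import Lra Lia ClassicalEpsilon FunctionalExtensionality PropExtensionality.
From HB Require Import structures.
Set Implicit Arguments. Unset Strict Implicit. Unset Printing Implicit Defensive.
Local Open Scope R_scope.

(* Multiplying by a generator e_i on the left or on the right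
   moves each coefficient to a single blade, up to a sign (lgenE, rgenE).  From
   these formulas: e_i e_j + e_j e_i = -2 delta_ij on both sides, left and right
   multiplications commute, and the sandwich T a = sum_j e_j a e_j is diagonal,
   scaling the e_A-coefficient by -(-1)^|A| (m - 2|A|); for m odd this never
   vanishes, so T is injective (sandwich_inj).

   Operator identities (d = left Dirac operator, g d = right one):
     d (g x) = (d g) x + T g,     d (T g) + T (d g) = -2 g d,
     d d g = - Lap g = g d d,     d (g d) = (d g) d,
     Lap (g x) = (Lap g) x + 2 g d,  Lap (x g) = x (Lap g) + 2 d g,
     Lap (T g) = T (Lap g).
   Hence d^3 (f x) = (d^3 f) x + T (d^2 f) - 2 d f d, symmetrically for
   (x f) d^3, and Lap^2 (x f x) is an explicit combination.  For harmonic f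
   the three expressions are -2 d f d, -2 d f d and 8 d f d; for inframonogenic
   f they are -T Lap f, -T Lap f and 4 T Lap f.  Injectivity of T concludes. *)

Definition cl0 (m : nat) : Cl m := fun _ => 0.
Definition cl_add (m : nat) (a b : Cl m) : Cl m := fun C => a C + b C.
Definition cl_scale (m : nat) (r : R) (a : Cl m) : Cl m := fun C => r * a C.
Arguments cl0 : clear implicits.

Lemma cl_addA (m : nat) : associative (@cl_add m).
Proof. move=> a b c; apply: functional_extensionality => C; rewrite /cl_add; ring. Qed.
Lemma cl_addC (m : nat) : commutative (@cl_add m).
Proof. move=> a b; apply: functional_extensionality => C; rewrite /cl_add; ring. Qed.
Lemma cl_add0 (m : nat) : left_id (cl0 m) (@cl_add m).
Proof. move=> a; apply: functional_extensionality => C; rewrite /cl_add /cl0; ring. Qed.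

HB.instance Definition _ (m : nat) :=
  Monoid.isComLaw.Build (Cl m) (cl0 m) (@cl_add m) (@cl_addA m) (@cl_addC m) (@cl_add0 m).

Notation "\csum_ ( i ) F" := (\big[@cl_add _/cl0 _]_i F)
  (at level 41, F at level 41, i at level 50).

Ltac cl_ring := apply: functional_extensionality => ?; rewrite /cl_add /cl_scale /cl0 /=; ring.

Ltac set_solve := apply/setP=> ?; rewrite !(inE, in_setD, in_setU);
  repeat match goal with |- context [?z \in ?X] => case: (z \in X) end;
  repeat match goal with |- context [?z == ?X] => case: (z == X) end; by [].

Section Clifford.
Variable m : nat.
Implicit Types (A B C : {set 'I_m}) (a b : Cl m) (i j k : 'I_m).

Lemma cl_sumE (I : Type) (r : seq I) (P : pred I) (F : I -> Cl m) C :
  (\big[@cl_add m/cl0 m]_(i <- r | P i) F i) C = \big[Rplus/0]_(i <- r | P i) F i C.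
Proof. by apply: (big_morph (fun a : Cl m => a C)). Qed.

Lemma sum_mulr (I : Type) (r : seq I) (P : pred I) (F : I -> R) c :
  c * \big[Rplus/0]_(i <- r | P i) F i = \big[Rplus/0]_(i <- r | P i) (c * F i).
Proof.
elim: r => [|x r IH]; rewrite ?big_nil ?big_cons; first ring.
case: (P x); rewrite -IH; ring.
Qed.

Lemma cl_scale_sum r (I : Type) (s : seq I) (P : pred I) (F : I -> Cl m) :
  cl_scale r (\big[@cl_add m/cl0 m]_(k <- s | P k) F k)
  = \big[@cl_add m/cl0 m]_(k <- s | P k) cl_scale r (F k).
Proof. apply: big_morph => [a b|]; cl_ring. Qed.

Lemma cl_scaleA r1 r2 a : cl_scale r1 (cl_scale r2 a) = cl_scale (r1 * r2) a.
Proof. cl_ring. Qed.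

Definition parity (S : {set 'I_m}) : R := (-1) ^ #|S|.

(* |A (+) B| + 2 |A cap B| = |A| + |B|, hence the parity of a symmetric
   difference is the product of the parities. *)
Lemma card_symdiff A B : (#|symdiff A B| + 2 * #|A :&: B| = #|A| + #|B|)%N.
Proof.
have hA := cardsID B A; have hB := cardsID A B.
have hU := cardsUI (A :\: B) (B :\: A).
have disj : (A :\: B) :&: (B :\: A) = set0 by set_solve.
rewrite disj cards0 addn0 in hU.
rewrite /symdiff hU -hA -hB (setIC B A).
set x := #|A :&: B|; set y := #|A :\: B|; set z := #|B :\: A|.
rewrite -!plusE -multE; lia.
Qed.

Lemma parity_symdiff A B : parity (symdiff A B) = parity A * parity B.
Proof.
rewrite /parity -pow_add plusE -card_symdiff -plusE pow_add -multE pow_mult.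
have -> : (-1) ^ 2 = 1 by simpl; ring.
by rewrite pow1 Rmult_1_r.
Qed.

Lemma parity1 i : parity [set i] = -1.
Proof. by rewrite /parity cards1 /=; ring. Qed.

Lemma parity0 : parity set0 = 1.
Proof. by rewrite /parity cards0. Qed.

Lemma parity_sq C : parity C * parity C = 1.
Proof. by rewrite /parity -Rpow_mult_distr Rmult_opp_opp Rmult_1_l pow1. Qed.

Lemma parity_neq0 C : parity C <> 0.
Proof. by apply: pow_nonzero; lra. Qed.

Lemma in_symdiff A B x : (x \in symdiff A B) = (x \in A) (+) (x \in B).
Proof. by rewrite /symdiff !inE; case: (x \in A); case: (x \in B). Qed.

Lemma symdiffKl A B : symdiff A (symdiff A B) = B.
Proof. set_solve. Qed.

Lemma symdiffKr A B : symdiff (symdiff A B) B = A.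
Proof. set_solve. Qed.

Lemma symdiffC A B : symdiff A B = symdiff B A.
Proof. set_solve. Qed.

Lemma symdiffIl A B S : symdiff A B :&: S = symdiff (A :&: S) (B :&: S).
Proof. set_solve. Qed.

Definition le_set i := [set k : 'I_m | (k <= i)%N].
Definition ge_set i := [set k : 'I_m | (i <= k)%N].

(* Sign of e_i e_B: e_i anticommutes past the elements of B below it, and
   squares to -1 if i is in B. *)
Lemma blade_sign_gen_l i B : blade_sign [set i] B = parity (B :&: le_set i).
Proof.
rewrite /blade_sign /parity.
have -> : [set p : 'I_m * 'I_m | (p.1 \in [set i]) && (p.2 \in B) && (p.2 < p.1)%N]
    = [set (i, k) | k in [set k in B | (k < i)%N]].
  apply/setP=> [[p q]]; rewrite !inE /=; apply/idP/imsetP.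
  - by move=> /andP[/andP[/eqP -> hq] hl]; exists q => //; rewrite inE hq.
  - by move=> [k]; rewrite inE => /andP[hk hl] [-> ->]; rewrite eqxx hk hl.
rewrite card_imset; last by move=> x y [].
rewrite -(cardsID [set i] (B :&: le_set i)) addnC.
have -> : B :&: le_set i :&: [set i] = [set i] :&: B.
  by apply/setP=> x; rewrite !inE; case: (x =P i) => [->|]; rewrite ?leqnn ?andbT ?andbF.
have -> // : B :&: le_set i :\: [set i] = [set k in B | (k < i)%N].
by apply/setP=> x; rewrite !inE ltn_neqAle; case: (x \in B); rewrite ?andbF //= andbT.
Qed.

Lemma blade_sign_gen_r i B : blade_sign B [set i] = parity (B :&: ge_set i).
Proof.
rewrite /blade_sign /parity.
have -> : [set p : 'I_m * 'I_m | (p.1 \in B) && (p.2 \in [set i]) && (p.2 < p.1)%N]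
    = [set (k, i) | k in [set k in B | (i < k)%N]].
  apply/setP=> [[p q]]; rewrite !inE /=; apply/idP/imsetP.
  - by move=> /andP[/andP[hp /eqP ->] hl]; exists p => //; rewrite inE hp.
  - by move=> [k]; rewrite inE => /andP[hk hl] [-> ->]; rewrite eqxx hk hl.
rewrite card_imset; last by move=> x y [].
rewrite -(cardsID [set i] (B :&: ge_set i)) addnC.
have -> : B :&: ge_set i :&: [set i] = B :&: [set i].
  by apply/setP=> x; rewrite !inE; case: (x =P i) => [->|]; rewrite ?leqnn ?andbT ?andbF.
have -> // : B :&: ge_set i :\: [set i] = [set k in B | (i < k)%N].
apply/setP=> x; rewrite !inE ltn_neqAle; case: (x \in B); rewrite ?andbF //=.
by rewrite -val_eqE eq_sym.
Qed.

Lemma parity_set1_le i j : parity ([set i] :&: le_set j) = if (i <= j)%N then -1 else 1.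
Proof.
have -> : [set i] :&: le_set j = if (i <= j)%N then [set i] else set0.
  by case: ifP => h; apply/setP=> z; rewrite !inE; case: (z =P i) => [->|]; rewrite ?h.
by case: ifP; rewrite ?parity1 ?parity0.
Qed.

Lemma parity_set1_ge i j : parity ([set i] :&: ge_set j) = if (j <= i)%N then -1 else 1.
Proof.
have -> : [set i] :&: ge_set j = if (j <= i)%N then [set i] else set0.
  by case: ifP => h; apply/setP=> z; rewrite !inE; case: (z =P i) => [->|]; rewrite ?h.
by case: ifP; rewrite ?parity1 ?parity0.
Qed.

Definition lgen i a : Cl m := clmul (gen i) a.
Definition rgen i a : Cl m := clmul a (gen i).

Lemma lgenE i a C :
  lgen i a C = a (symdiff [set i] C) * parity (symdiff [set i] C :&: le_set i).
Proof.
rewrite /lgen /clmul (bigD1 [set i]) //= big1 ?Rplus_0_r.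
  by rewrite /gen eqxx Rmult_1_l blade_sign_gen_l.
by move=> A /negPf hA; rewrite /gen hA !Rmult_0_l.
Qed.

Lemma rgenE i a C :
  rgen i a C = a (symdiff C [set i]) * parity (symdiff C [set i] :&: ge_set i).
Proof.
rewrite /rgen /clmul (bigD1 (symdiff C [set i])) //= big1 ?Rplus_0_r.
  by rewrite /gen (symdiffC _ C) symdiffKl eqxx Rmult_1_r blade_sign_gen_r.
move=> A hA; rewrite /gen; case: eqP => [e|]; last by rewrite Rmult_0_r Rmult_0_l.
by case/eqP: hA; rewrite -e symdiffC symdiffKr.
Qed.

Ltac gen_expand := rewrite ?lgenE ?rgenE ?lgenE
  ?symdiffIl ?parity_symdiff ?parity_set1_le ?parity_set1_ge ?leqnn.

Lemma lgen_anticomm i j a :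
  cl_add (lgen i (lgen j a)) (lgen j (lgen i a))
  = if i == j then cl_scale (-2) a else cl0 m.
Proof.
case: (eqVneq i j) => [<-|hij]; apply: functional_extensionality => C;
  rewrite /cl_add /cl_scale /cl0; gen_expand.
- by rewrite symdiffKl -[RHS]Rmult_1_r -(parity_sq (C :&: le_set i)); ring.
- have -> : symdiff [set j] (symdiff [set i] C) = symdiff [set i] (symdiff [set j] C)
    by set_solve.
  case: (ltngtP i j) => h /=; try ring.
  by case/eqP: hij; apply: val_inj.
Qed.

Lemma rgen_anticomm i j a :
  cl_add (rgen i (rgen j a)) (rgen j (rgen i a))
  = if i == j then cl_scale (-2) a else cl0 m.
Proof.
case: (eqVneq i j) => [<-|hij]; apply: functional_extensionality => C;
  rewrite /cl_add /cl_scale /cl0; gen_expand.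
- by rewrite symdiffKr -[RHS]Rmult_1_r -(parity_sq (C :&: ge_set i)); ring.
- have -> : symdiff (symdiff C [set i]) [set j] = symdiff (symdiff C [set j]) [set i]
    by set_solve.
  case: (ltngtP i j) => h /=; try ring.
  by case/eqP: hij; apply: val_inj.
Qed.

Lemma lgen_rgen i j a : lgen i (rgen j a) = rgen j (lgen i a).
Proof.
apply: functional_extensionality => C; gen_expand.
have -> : symdiff (symdiff [set i] C) [set j] = symdiff [set i] (symdiff C [set j])
  by set_solve.
by case: (ltngtP i j) => h /=; ring.
Qed.

Definition sandwich a : Cl m := fun C => \big[Rplus/0]_j lgen j (rgen j a) C.

(* The eigenvalue of the sandwich on the blade e_C:
   - (-1)^|C| sum_j (-1)^[j in C] = - (-1)^|C| (m - 2|C|). *)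
Definition sandwich_coef C : R :=
  - parity C * \big[Rplus/0]_(j : 'I_m) (if j \in C then -1 else 1).

Lemma lgen_rgen_diag j a C :
  lgen j (rgen j a) C = a C * (- parity C * (if j \in C then -1 else 1)).
Proof.
have cancel_j : symdiff (symdiff [set j] C) [set j] = C by set_solve.
rewrite lgenE rgenE cancel_j symdiffIl parity_symdiff parity_set1_le leqnn.
have split_j : symdiff (C :&: ge_set j) (C :&: le_set j) = symdiff C (C :&: [set j]).
  apply/setP=> z; rewrite !(in_symdiff, inE); case: (z \in C) => //=.
  case: (ltngtP z j) => h.
  - by apply/esym/eqP => e; rewrite e ltnn in h.
  - by apply/esym/eqP => e; rewrite e ltnn in h.
  - have -> : z = j by apply: val_inj.
    by rewrite eqxx.
have meet_j : C :&: [set j] = if j \in C then [set j] else set0.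
  by case: ifP => h; apply/setP=> z; rewrite !inE andbC; case: (z =P j) => [->|]; rewrite ?h.
have key : parity (C :&: ge_set j) * parity (C :&: le_set j)
    = parity C * (if j \in C then -1 else 1).
  rewrite -parity_symdiff split_j parity_symdiff meet_j.
  by case: ifP; rewrite ?parity1 ?parity0.
transitivity (- (a C * (parity (C :&: ge_set j) * parity (C :&: le_set j)))); first ring.
by rewrite key; ring.
Qed.

Lemma sandwichE a C : sandwich a C = a C * sandwich_coef C.
Proof.
rewrite /sandwich /sandwich_coef (eq_bigr _ (fun j _ => lgen_rgen_diag j a C)).
by rewrite -!sum_mulr.
Qed.

Lemma iter_Rplus n c : iter n (Rplus c) 0 = INR n * c.
Proof. by elim: n => [|n IH]; rewrite ?iterS ?IH ?S_INR /=; ring. Qed.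

Lemma sum_signs C :
  \big[Rplus/0]_(j : 'I_m) (if j \in C then -1 else 1) = INR m - 2 * INR #|C|.
Proof.
have split_sign j : (if j \in C then -1 else 1) = 1 + (if j \in C then -2 else 0).
  by case: (j \in C); ring.
rewrite (eq_bigr _ (fun j _ => split_sign j)) big_split /= -big_mkcond !big_const.
rewrite !iter_Rplus card_ord.
have affine n : INR m * 1 + INR n * -2 = INR m - 2 * INR n by ring.
exact: affine.
Qed.

(* In odd dimension m - 2|C| never vanishes, so neither does the sandwich
   coefficient. *)
Lemma sandwich_coef_neq0 (Hm : odd m) C : sandwich_coef C <> 0.
Proof.
rewrite /sandwich_coef sum_signs => /Rmult_integral [hp|hc].
  by case: (@parity_neq0 C); lra.
have twice n : INR m - 2 * INR n = 0 -> INR m = INR (2 * n)%N.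
  by rewrite -multE mult_INR /=; lra.
move/twice/INR_eq: hc => hm.
by rewrite hm oddM in Hm.
Qed.

Lemma sandwich_inj (Hm : odd m) a : clzero (sandwich a) -> clzero a.
Proof.
move=> h C; have := h C; rewrite sandwichE => /Rmult_integral [] // hc.
by case: (sandwich_coef_neq0 Hm hc).
Qed.

Lemma lgen_add i a b : lgen i (cl_add a b) = cl_add (lgen i a) (lgen i b).
Proof. apply: functional_extensionality => C; rewrite /cl_add !lgenE; ring. Qed.
Lemma lgen_scale i r a : lgen i (cl_scale r a) = cl_scale r (lgen i a).
Proof. apply: functional_extensionality => C; rewrite /cl_scale !lgenE; ring. Qed.
Lemma lgen0 i : lgen i (cl0 m) = cl0 m.
Proof. apply: functional_extensionality => C; rewrite /cl0 !lgenE; ring. Qed.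
Lemma lgen_sum i (I : Type) (r : seq I) (P : pred I) (F : I -> Cl m) :
  lgen i (\big[@cl_add m/cl0 m]_(k <- r | P k) F k)
  = \big[@cl_add m/cl0 m]_(k <- r | P k) lgen i (F k).
Proof. by apply: big_morph; [exact: lgen_add | exact: lgen0]. Qed.

Lemma rgen_add i a b : rgen i (cl_add a b) = cl_add (rgen i a) (rgen i b).
Proof. apply: functional_extensionality => C; rewrite /cl_add !rgenE; ring. Qed.
Lemma rgen_scale i r a : rgen i (cl_scale r a) = cl_scale r (rgen i a).
Proof. apply: functional_extensionality => C; rewrite /cl_scale !rgenE; ring. Qed.
Lemma rgen0 i : rgen i (cl0 m) = cl0 m.
Proof. apply: functional_extensionality => C; rewrite /cl0 !rgenE; ring. Qed.
Lemma rgen_sum i (I : Type) (r : seq I) (P : pred I) (F : I -> Cl m) :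
  rgen i (\big[@cl_add m/cl0 m]_(k <- r | P k) F k)
  = \big[@cl_add m/cl0 m]_(k <- r | P k) rgen i (F k).
Proof. by apply: big_morph; [exact: rgen_add | exact: rgen0]. Qed.

Lemma sandwich_add a b : sandwich (cl_add a b) = cl_add (sandwich a) (sandwich b).
Proof. apply: functional_extensionality => C; rewrite /cl_add !sandwichE; ring. Qed.
Lemma sandwich_scale r a : sandwich (cl_scale r a) = cl_scale r (sandwich a).
Proof. apply: functional_extensionality => C; rewrite /cl_scale !sandwichE; ring. Qed.
Lemma sandwich0 : sandwich (cl0 m) = cl0 m.
Proof. apply: functional_extensionality => C; rewrite /cl0 !sandwichE; ring. Qed.
Lemma sandwich_sum (I : Type) (r : seq I) (P : pred I) (F : I -> Cl m) :
  sandwich (\big[@cl_add m/cl0 m]_(k <- r | P k) F k)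
  = \big[@cl_add m/cl0 m]_(k <- r | P k) sandwich (F k).
Proof. by apply: big_morph; [exact: sandwich_add | exact: sandwich0]. Qed.

Lemma sandwich_lr a : sandwich a = \csum_(j) lgen j (rgen j a).
Proof. by apply: functional_extensionality => C; rewrite cl_sumE. Qed.

Lemma sandwich_rl a : sandwich a = \csum_(j) rgen j (lgen j a).
Proof. by rewrite sandwich_lr; apply: eq_bigr => j _; exact: lgen_rgen. Qed.

Lemma csum_delta (G : 'I_m -> Cl m) j :
  \csum_(k) (if k == j then G k else cl0 m) = G j.
Proof. by rewrite -big_mkcond /= big_pred1_eq. Qed.

Lemma lgen_sandwich j a :
  cl_add (lgen j (sandwich a)) (sandwich (lgen j a)) = cl_scale (-2) (rgen j a).
Proof.
rewrite !sandwich_lr lgen_sum.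
under [X in cl_add _ X]eq_bigr => i _ do rewrite -lgen_rgen.
rewrite -big_split /=.
under eq_bigr => i _ do rewrite lgen_anticomm eq_sym.
by rewrite (csum_delta (fun i => cl_scale (-2) (rgen i a))).
Qed.

Lemma rgen_sandwich j a :
  cl_add (rgen j (sandwich a)) (sandwich (rgen j a)) = cl_scale (-2) (lgen j a).
Proof.
rewrite !sandwich_rl rgen_sum.
under [X in cl_add _ X]eq_bigr => i _ do rewrite lgen_rgen.
rewrite -big_split /=.
under eq_bigr => i _ do rewrite rgen_anticomm eq_sym.
by rewrite (csum_delta (fun i => cl_scale (-2) (lgen i a))).
Qed.

Lemma half_eq a b : cl_add a a = cl_scale (-2) b -> a = cl_scale (-1) b.
Proof.
move=> h; apply: functional_extensionality => C.
by have := f_equal (fun z => z C) h; rewrite /cl_add /cl_scale; lra.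
Qed.

(* For a symmetric family b, sum_ij e_i e_j b_ij = - sum_j b_jj, and likewise
   from the right: the Clifford relations turn the square of the Dirac
   operator into minus the Laplacian. *)
Lemma lgen_sym_sum (b : 'I_m -> 'I_m -> Cl m) : (forall i j, b i j = b j i) ->
  \csum_(i) \csum_(j) lgen i (lgen j (b i j)) = cl_scale (-1) (\csum_(j) b j j).
Proof.
move=> hb; apply: half_eq.
rewrite [X in cl_add _ X]exchange_big /= -big_split /= cl_scale_sum.
apply: eq_bigr => i _; rewrite -big_split /=.
under eq_bigr => j _ do rewrite [b j i]hb lgen_anticomm eq_sym.
by rewrite (csum_delta (fun k => cl_scale (-2) (b i k))).
Qed.

Lemma rgen_sym_sum (b : 'I_m -> 'I_m -> Cl m) : (forall i j, b i j = b j i) ->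
  \csum_(i) \csum_(j) rgen i (rgen j (b i j)) = cl_scale (-1) (\csum_(j) b j j).
Proof.
move=> hb; apply: half_eq.
rewrite [X in cl_add _ X]exchange_big /= -big_split /= cl_scale_sum.
apply: eq_bigr => i _; rewrite -big_split /=.
under eq_bigr => j _ do rewrite [b j i]hb rgen_anticomm eq_sym.
by rewrite (csum_delta (fun k => cl_scale (-2) (b i k))).
Qed.

Definition rmul_vec (x : point m) a : Cl m := \csum_(k) cl_scale (x k) (rgen k a).
Definition lmul_vec (x : point m) a : Cl m := \csum_(k) cl_scale (x k) (lgen k a).

Lemma clmul_vec_r a x : clmul a (vec x) = rmul_vec x a.
Proof.
apply: functional_extensionality => C; rewrite /rmul_vec cl_sumE /clmul.
have expand_vec A : a A * vec x (symdiff A C) * blade_sign A (symdiff A C)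
    = \big[Rplus/0]_(k : 'I_m)
        (x k * (a A * gen k (symdiff A C) * blade_sign A (symdiff A C))).
  transitivity (a A * blade_sign A (symdiff A C) * vec x (symdiff A C)); first ring.
  by rewrite /vec sum_mulr; apply: eq_bigr => k _; ring.
rewrite (eq_bigr _ (fun A _ => expand_vec A)) exchange_big /=.
by apply: eq_bigr => k _; rewrite /cl_scale -sum_mulr.
Qed.

Lemma clmul_vec_l a x : clmul (vec x) a = lmul_vec x a.
Proof.
apply: functional_extensionality => C; rewrite /lmul_vec cl_sumE /clmul.
have expand_vec A : vec x A * a (symdiff A C) * blade_sign A (symdiff A C)
    = \big[Rplus/0]_(k : 'I_m)
        (x k * (gen k A * a (symdiff A C) * blade_sign A (symdiff A C))).
  transitivity (a (symdiff A C) * blade_sign A (symdiff A C) * vec x A); first ring.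
  by rewrite /vec sum_mulr; apply: eq_bigr => k _; ring.
rewrite (eq_bigr _ (fun A _ => expand_vec A)) exchange_big /=.
by apply: eq_bigr => k _; rewrite /cl_scale -sum_mulr.
Qed.

Lemma rmul_vec_sum x (I : Type) (r : seq I) (G : I -> Cl m) :
  rmul_vec x (\big[@cl_add m/cl0 m]_(u <- r) G u)
  = \big[@cl_add m/cl0 m]_(u <- r) rmul_vec x (G u).
Proof.
rewrite /rmul_vec -exchange_big /=.
by apply: eq_bigr => k _; rewrite rgen_sum cl_scale_sum.
Qed.

Lemma lmul_vec_sum x (I : Type) (r : seq I) (G : I -> Cl m) :
  lmul_vec x (\big[@cl_add m/cl0 m]_(u <- r) G u)
  = \big[@cl_add m/cl0 m]_(u <- r) lmul_vec x (G u).
Proof.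
rewrite /lmul_vec -exchange_big /=.
by apply: eq_bigr => k _; rewrite lgen_sum cl_scale_sum.
Qed.

Lemma rmul_vec_add x a b : rmul_vec x (cl_add a b) = cl_add (rmul_vec x a) (rmul_vec x b).
Proof.
rewrite /rmul_vec -big_split /=; apply: eq_bigr => k _; rewrite rgen_add; cl_ring.
Qed.

Lemma rmul_vec_scale x r a : rmul_vec x (cl_scale r a) = cl_scale r (rmul_vec x a).
Proof.
rewrite /rmul_vec cl_scale_sum; apply: eq_bigr => k _.
by rewrite rgen_scale !cl_scaleA Rmult_comm.
Qed.

Lemma rmul_vec0 x : rmul_vec x (cl0 m) = cl0 m.
Proof. by rewrite /rmul_vec big1 // => k _; rewrite rgen0; cl_ring. Qed.

Lemma lmul_vec0 x : lmul_vec x (cl0 m) = cl0 m.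
Proof. by rewrite /lmul_vec big1 // => k _; rewrite lgen0; cl_ring. Qed.

Lemma lgen_rmul_vec j x b : lgen j (rmul_vec x b) = rmul_vec x (lgen j b).
Proof. by rewrite /rmul_vec lgen_sum; apply: eq_bigr => k _; rewrite lgen_scale lgen_rgen. Qed.

Lemma rgen_lmul_vec j x b : rgen j (lmul_vec x b) = lmul_vec x (rgen j b).
Proof. by rewrite /lmul_vec rgen_sum; apply: eq_bigr => k _; rewrite rgen_scale lgen_rgen. Qed.
End Clifford.

Section Analysis.
Variables (m : nat) (Om : point m -> Prop) (HO : open_Rm Om).
Local Notation F := (point m -> Cl m).
Implicit Types (g h : F) (i j k : 'I_m) (x : point m) (C : {set 'I_m}).

Definition eq_on g h := forall x, Om x -> g x = h x.

Definition has_pd j g x C l := derivable_pt_lim (fun t => g (upd x j t) C) (x j) l.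

Lemma upd_same x j : upd x j (x j) = x.
Proof. by apply: functional_extensionality => i; rewrite /upd; case: eqP => [->|]. Qed.

Lemma segment_in x j : Om x ->
  exists r, 0 < r /\ forall t, x j - r < t < x j + r -> Om (upd x j t).
Proof.
move=> hx; case: (HO hx) => r [hr H]; exists r; split => // t ht; apply: H => i.
rewrite /upd; case: eqP => [->|_]; first by apply: Rabs_def1; lra.
by rewrite Rminus_diag Rabs_R0.
Qed.

Lemma has_pd_local j g h x C l : Om x -> eq_on g h -> has_pd j g x C l -> has_pd j h x C l.
Proof.
move=> hx H; case: (segment_in j hx) => r [hr Hr].
apply: (derivable_pt_lim_locally_ext _ _ _ (x j - r) (x j + r)); first lra.
by move=> z hz; rewrite H //; apply: Hr.
Qed.

Lemma pd_local j g h : eq_on g h -> eq_on (pd j g) (pd j h).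
Proof.
move=> H x hx; apply: functional_extensionality => C; rewrite /pd.
congr (epsilon _ _); apply: functional_extensionality => l.
apply: propositional_extensionality; split; apply: has_pd_local => //.
by move=> y hy; rewrite H.
Qed.

Lemma pd_spec j g x C l : has_pd j g x C l -> pd j g x C = l.
Proof.
move=> H; rewrite /pd.
have := epsilon_spec (inhabits 0)
  (fun l => derivable_pt_lim (fun t => g (upd x j t) C) (x j) l) (ex_intro _ l H).
by move/uniqueness_limite; apply.
Qed.

Fixpoint smooth (n : nat) g : Prop :=
  match n with
  | 0 => True
  | n.+1 => (forall j x C, Om x -> has_pd j g x C (pd j g x C)) /\
            forall j, smooth n (pd j g)
  end.

Lemma smoothS n g : smooth n.+1 g -> smooth n g.
Proof. by elim: n g => [|n IH] g //= [H1 H2]; split => // j; apply: IH. Qed.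

Lemma smooth_le n p g : (p <= n)%N -> smooth n g -> smooth p g.
Proof.
elim: n g => [|n IH] g; first by rewrite leqn0 => /eqP ->.
rewrite leq_eqVlt => /orP[/eqP -> //|hp] /smoothS; exact: IH.
Qed.

Lemma smooth1 n g : smooth n.+1 g -> smooth 1 g.
Proof. exact: smooth_le. Qed.

Lemma smooth_pd n j g : smooth n.+1 g -> smooth n (pd j g).
Proof. by case=> _; apply. Qed.

Lemma smooth_has_pd g j x C : smooth 1 g -> Om x -> has_pd j g x C (pd j g x C).
Proof. by case=> H _ hx; apply: H. Qed.

Lemma smooth_ext n g h : eq_on g h -> smooth n g -> smooth n h.
Proof.
elim: n g h => [|n IH] g h //= H [H1 H2]; split.
- move=> j x C hx; rewrite -(pd_local j H hx); exact: has_pd_local (H1 j x C hx).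
- by move=> j; apply: (IH (pd j g)); [exact: pd_local | exact: H2].
Qed.

Definition fadd g h : F := fun x => cl_add (g x) (h x).
Definition fscale r g : F := fun x => cl_scale r (g x).
Definition f0 : F := fun _ => cl0 m.
Definition flgen i g : F := fun x => lgen i (g x).
Definition frgen i g : F := fun x => rgen i (g x).
Definition fsandwich g : F := fun x => sandwich (g x).
Definition fcoord k g : F := fun x => cl_scale (x k) (g x).
Definition fsum (I : Type) (r : seq I) (G : I -> F) : F :=
  fun x => \big[@cl_add m/cl0 m]_(i <- r) G i x.

Lemma has_pd_ext j g h x C l :
  (forall y, h y C = g y C) -> has_pd j g x C l -> has_pd j h x C l.
Proof. by move=> H; apply: derivable_pt_lim_ext => t; rewrite H. Qed.

Lemma has_pd_add j g h x C l1 l2 :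
  has_pd j g x C l1 -> has_pd j h x C l2 -> has_pd j (fadd g h) x C (l1 + l2).
Proof. exact: derivable_pt_lim_plus. Qed.

(* Coefficientwise operations a |-> (C |-> a (s C) * c C): multiplication by a
   generator on either side, the sandwich and scaling are all of this form. *)
Definition fcoef (s : {set 'I_m} -> {set 'I_m}) (c : {set 'I_m} -> R) g : F :=
  fun x C => g x (s C) * c C.

Lemma has_pd_fcoef j s c g x C l :
  has_pd j g x (s C) l -> has_pd j (fcoef s c g) x C (l * c C).
Proof. exact: derivable_pt_lim_scal_right. Qed.

Lemma has_pd0 j x C : has_pd j f0 x C 0.
Proof. exact: derivable_pt_lim_const. Qed.

Lemma has_pd_coord j k g x C l : has_pd j g x C l ->
  has_pd j (fcoord k g) x C ((if k == j then g x C else 0) + x k * l).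
Proof.
move=> hg.
have hk : derivable_pt_lim (fun t => upd x j t k) (x j) (if k == j then 1 else 0).
  case: eqP => [->|hk].
  - apply: (derivable_pt_lim_ext id); last exact: derivable_pt_lim_id.
    by move=> z; rewrite /upd eqxx.
  - apply: (derivable_pt_lim_ext (fct_cte (x k))); last exact: derivable_pt_lim_const.
    by move=> z; rewrite /upd /fct_cte; case: eqP.
have := derivable_pt_lim_mult _ _ _ _ _ hk hg.
rewrite /mult_fct /= upd_same.
have -> : (if k == j then 1 else 0) * g x C + x k * l
    = (if k == j then g x C else 0) + x k * l by case: (k == j); ring.
by apply: derivable_pt_lim_ext => t; rewrite /fcoord /cl_scale.
Qed.

Lemma has_pd_sum (I : Type) (r : seq I) (G : I -> F) j x C (l : I -> R) :
  (forall u, has_pd j (G u) x C (l u)) ->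
  has_pd j (fsum r G) x C (\big[Rplus/0]_(u <- r) l u).
Proof.
move=> H; elim: r => [|a r IH].
- rewrite big_nil; apply: has_pd_ext (has_pd0 j x C) => y; by rewrite /fsum big_nil.
- rewrite big_cons; apply: (has_pd_ext (g := fadd (G a) (fsum r G))).
    by move=> y; rewrite /fsum big_cons.
  exact: has_pd_add.
Qed.

Lemma flgenE i g :
  flgen i g = fcoef (symdiff [set i]) (fun C => parity (symdiff [set i] C :&: le_set i)) g.
Proof. by do 2 apply: functional_extensionality => ?; rewrite /flgen lgenE. Qed.

Lemma frgenE i g :
  frgen i g = fcoef (fun C => symdiff C [set i])
                    (fun C => parity (symdiff C [set i] :&: ge_set i)) g.
Proof. by do 2 apply: functional_extensionality => ?; rewrite /frgen rgenE. Qed.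

Lemma fsandwichE g : fsandwich g = fcoef id (@sandwich_coef m) g.
Proof. by do 2 apply: functional_extensionality => ?; rewrite /fsandwich sandwichE. Qed.

Lemma fscaleE r g : fscale r g = fcoef id (fun _ => r) g.
Proof. by do 2 apply: functional_extensionality => ?; rewrite /fscale /cl_scale Rmult_comm. Qed.

Section DerivativeRules.
Variables (j : 'I_m) (x : point m).
Hypothesis hx : Om x.

Lemma pd_fcoef s c g : smooth 1 g -> pd j (fcoef s c g) x = fcoef s c (pd j g) x.
Proof.
move=> sg; apply: functional_extensionality => C; apply: pd_spec.
exact/has_pd_fcoef/smooth_has_pd.
Qed.

Lemma pd_add g h : smooth 1 g -> smooth 1 h -> pd j (fadd g h) x = cl_add (pd j g x) (pd j h x).
Proof.
move=> sg sh; apply: functional_extensionality => C; apply: pd_spec.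
by apply: has_pd_add; exact: smooth_has_pd.
Qed.

Lemma pd_scale r g : smooth 1 g -> pd j (fscale r g) x = cl_scale r (pd j g x).
Proof. by move=> sg; rewrite !fscaleE pd_fcoef // /fcoef; cl_ring. Qed.

Lemma pd_flgen i g : smooth 1 g -> pd j (flgen i g) x = lgen i (pd j g x).
Proof.
move=> sg; rewrite flgenE pd_fcoef //.
by apply: functional_extensionality => C; rewrite lgenE.
Qed.

Lemma pd_frgen i g : smooth 1 g -> pd j (frgen i g) x = rgen i (pd j g x).
Proof.
move=> sg; rewrite frgenE pd_fcoef //.
by apply: functional_extensionality => C; rewrite rgenE.
Qed.

Lemma pd_fsandwich g : smooth 1 g -> pd j (fsandwich g) x = sandwich (pd j g x).
Proof.
move=> sg; rewrite fsandwichE pd_fcoef //.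
by apply: functional_extensionality => C; rewrite sandwichE.
Qed.

Lemma pd_fcoord k g : smooth 1 g ->
  pd j (fcoord k g) x = cl_add (if k == j then g x else cl0 m) (cl_scale (x k) (pd j g x)).
Proof.
move=> sg; apply: functional_extensionality => C; apply: pd_spec.
rewrite /cl_add /cl_scale (_ : (if k == j then g x else cl0 m) C = if k == j then g x C else 0).
  by apply: has_pd_coord; exact: smooth_has_pd.
by case: (k == j).
Qed.

Lemma pd_fsum (I : Type) (r : seq I) (G : I -> F) : (forall u, smooth 1 (G u)) ->
  pd j (fsum r G) x = \big[@cl_add m/cl0 m]_(u <- r) pd j (G u) x.
Proof.
move=> sG; apply: functional_extensionality => C; apply: pd_spec.
by rewrite cl_sumE; apply: has_pd_sum => u; exact: smooth_has_pd.
Qed.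
End DerivativeRules.

Lemma pd_f0 j x : pd j f0 x = cl0 m.
Proof. by apply: functional_extensionality => C; apply: pd_spec; exact: has_pd0. Qed.

Lemma smooth0 n : smooth n f0.
Proof.
elim: n => [|n IH] //=; split => [j x C hx|j]; first by rewrite pd_f0; exact: has_pd0.
by apply: smooth_ext IH => x hx; rewrite pd_f0.
Qed.

Lemma smooth_add n g h : smooth n g -> smooth n h -> smooth n (fadd g h).
Proof.
elim: n g h => [|n IH] g h //= sg sh; split.
- move=> j x C hx; rewrite pd_add //; [|exact: smooth1 sg|exact: smooth1 sh].
  by apply: has_pd_add; [exact: sg.1 | exact: sh.1].
- move=> j; apply: (smooth_ext (g := fadd (pd j g) (pd j h))).
    by move=> x hx; rewrite pd_add //; [exact: smooth1 sg | exact: smooth1 sh].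
  by apply: IH; [exact: sg.2 | exact: sh.2].
Qed.

Lemma smooth_fcoef n s c g : smooth n g -> smooth n (fcoef s c g).
Proof.
elim: n g => [|n IH] g //= sg; split.
- move=> j x C hx; rewrite pd_fcoef //; last exact: smooth1 sg.
  by apply: has_pd_fcoef; exact: sg.1.
- move=> j; apply: (smooth_ext (g := fcoef s c (pd j g))).
    by move=> x hx; rewrite pd_fcoef //; exact: smooth1 sg.
  by apply: IH; exact: sg.2.
Qed.

Lemma smooth_scale n r g : smooth n g -> smooth n (fscale r g).
Proof. by rewrite fscaleE; exact: smooth_fcoef. Qed.
Lemma smooth_flgen n i g : smooth n g -> smooth n (flgen i g).
Proof. by rewrite flgenE; exact: smooth_fcoef. Qed.
Lemma smooth_frgen n i g : smooth n g -> smooth n (frgen i g).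
Proof. by rewrite frgenE; exact: smooth_fcoef. Qed.
Lemma smooth_fsandwich n g : smooth n g -> smooth n (fsandwich g).
Proof. by rewrite fsandwichE; exact: smooth_fcoef. Qed.

Lemma smooth_fcoord n k g : smooth n g -> smooth n (fcoord k g).
Proof.
elim: n g => [|n IH] g //= sg; split.
- move=> j x C hx; rewrite pd_fcoord //; last exact: smooth1 sg.
  rewrite /cl_add /cl_scale (_ : (if k == j then g x else cl0 m) C = if k == j then g x C else 0).
    by apply: has_pd_coord; exact: sg.1.
  by case: (k == j).
- move=> j; apply: (smooth_ext (g := fadd (if k == j then g else f0) (fcoord k (pd j g)))).
    by move=> x hx; rewrite pd_fcoord //; [case: (k == j) | exact: smooth1 sg].
  apply: smooth_add; last by apply: IH; exact: sg.2.
  by case: (k == j); [exact: smoothS | exact: smooth0].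
Qed.

Lemma smooth_fsum n (I : Type) (r : seq I) (G : I -> F) :
  (forall u, smooth n (G u)) -> smooth n (fsum r G).
Proof.
move=> H; elim: r => [|a r IH].
  by apply: (smooth_ext (g := f0)) (smooth0 n) => x _; rewrite /fsum big_nil.
by apply: (smooth_ext (g := fadd (G a) (fsum r G))) (smooth_add (H a) IH) => x _;
  rewrite /fsum big_cons.
Qed.

Lemma diracLE g x : diracL g x = \csum_(j) lgen j (pd j g x).
Proof. by apply: functional_extensionality => C; rewrite cl_sumE. Qed.
Lemma diracRE g x : diracR g x = \csum_(j) rgen j (pd j g x).
Proof. by apply: functional_extensionality => C; rewrite cl_sumE. Qed.
Lemma lapE g x : lap g x = \csum_(j) pd j (pd j g) x.
Proof. by apply: functional_extensionality => C; rewrite cl_sumE. Qed.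
Lemma f_xE g x : f_x g x = rmul_vec x (g x).
Proof. exact: clmul_vec_r. Qed.
Lemma x_fE g x : x_f g x = lmul_vec x (g x).
Proof. exact: clmul_vec_l. Qed.

Lemma diracL_fsum g : diracL g = fsum (index_enum 'I_m) (fun j => flgen j (pd j g)).
Proof. by apply: functional_extensionality => x; rewrite diracLE. Qed.
Lemma diracR_fsum g : diracR g = fsum (index_enum 'I_m) (fun j => frgen j (pd j g)).
Proof. by apply: functional_extensionality => x; rewrite diracRE. Qed.
Lemma lap_fsum g : lap g = fsum (index_enum 'I_m) (fun j => pd j (pd j g)).
Proof. by apply: functional_extensionality => x; rewrite lapE. Qed.
Lemma f_x_fsum g : f_x g = fsum (index_enum 'I_m) (fun k => fcoord k (frgen k g)).
Proof. by apply: functional_extensionality => x; rewrite f_xE. Qed.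
Lemma x_f_fsum g : x_f g = fsum (index_enum 'I_m) (fun k => fcoord k (flgen k g)).
Proof. by apply: functional_extensionality => x; rewrite x_fE. Qed.

Lemma smooth_f_x n g : smooth n g -> smooth n (f_x g).
Proof.
by move=> sg; rewrite f_x_fsum; apply: smooth_fsum => k; apply/smooth_fcoord/smooth_frgen.
Qed.
Lemma smooth_x_f n g : smooth n g -> smooth n (x_f g).
Proof.
by move=> sg; rewrite x_f_fsum; apply: smooth_fsum => k; apply/smooth_fcoord/smooth_flgen.
Qed.
Lemma smooth_diracL n g : smooth n.+1 g -> smooth n (diracL g).
Proof.
by move=> sg; rewrite diracL_fsum; apply: smooth_fsum => k; apply/smooth_flgen/smooth_pd.
Qed.
Lemma smooth_diracR n g : smooth n.+1 g -> smooth n (diracR g).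
Proof.
by move=> sg; rewrite diracR_fsum; apply: smooth_fsum => k; apply/smooth_frgen/smooth_pd.
Qed.
Lemma smooth_lap n g : smooth n.+2 g -> smooth n (lap g).
Proof. by move=> sg; rewrite lap_fsum; apply: smooth_fsum => k; do 2 apply: smooth_pd. Qed.

Lemma diracL_local g h : eq_on g h -> eq_on (diracL g) (diracL h).
Proof. by move=> H x hx; rewrite !diracLE; apply: eq_bigr => j _; rewrite (pd_local j H hx). Qed.
Lemma diracR_local g h : eq_on g h -> eq_on (diracR g) (diracR h).
Proof. by move=> H x hx; rewrite !diracRE; apply: eq_bigr => j _; rewrite (pd_local j H hx). Qed.
Lemma lap_local g h : eq_on g h -> eq_on (lap g) (lap h).
Proof.
by move=> H x hx; rewrite !lapE; apply: eq_bigr => j _; rewrite (pd_local j (pd_local j H) hx).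
Qed.

Section OperatorDerivatives.
Variables (k : 'I_m) (x : point m).
Hypothesis hx : Om x.

Lemma pd_diracL g : smooth 2 g -> pd k (diracL g) x = \csum_(j) lgen j (pd k (pd j g) x).
Proof.
move=> sg; rewrite diracL_fsum pd_fsum // => [|j]; last exact/smooth_flgen/smooth_pd.
by apply: eq_bigr => j _; rewrite pd_flgen //; exact: smooth_pd.
Qed.

Lemma pd_diracR g : smooth 2 g -> pd k (diracR g) x = \csum_(j) rgen j (pd k (pd j g) x).
Proof.
move=> sg; rewrite diracR_fsum pd_fsum // => [|j]; last exact/smooth_frgen/smooth_pd.
by apply: eq_bigr => j _; rewrite pd_frgen //; exact: smooth_pd.
Qed.

Lemma pd_f_x g : smooth 1 g -> pd k (f_x g) x = cl_add (rgen k (g x)) (rmul_vec x (pd k g x)).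
Proof.
move=> sg; rewrite f_x_fsum pd_fsum // => [|j]; last exact/smooth_fcoord/smooth_frgen.
rewrite (eq_bigr (fun j => cl_add (if j == k then rgen j (g x) else cl0 m)
                                  (cl_scale (x j) (rgen j (pd k g x))))).
  by rewrite big_split /= (csum_delta (fun j => rgen j (g x))).
by move=> j _; rewrite pd_fcoord ?pd_frgen //; exact: smooth_frgen.
Qed.

Lemma pd_x_f g : smooth 1 g -> pd k (x_f g) x = cl_add (lgen k (g x)) (lmul_vec x (pd k g x)).
Proof.
move=> sg; rewrite x_f_fsum pd_fsum // => [|j]; last exact/smooth_fcoord/smooth_flgen.
rewrite (eq_bigr (fun j => cl_add (if j == k then lgen j (g x) else cl0 m)
                                  (cl_scale (x j) (lgen j (pd k g x))))).
  by rewrite big_split /= (csum_delta (fun j => lgen j (g x))).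
by move=> j _; rewrite pd_fcoord ?pd_flgen //; exact: smooth_flgen.
Qed.
End OperatorDerivatives.

Lemma diracL_add g h : smooth 1 g -> smooth 1 h ->
  eq_on (diracL (fadd g h)) (fadd (diracL g) (diracL h)).
Proof.
move=> sg sh x hx; rewrite /fadd !diracLE -big_split /=.
by apply: eq_bigr => j _; rewrite pd_add // lgen_add.
Qed.
Lemma diracR_add g h : smooth 1 g -> smooth 1 h ->
  eq_on (diracR (fadd g h)) (fadd (diracR g) (diracR h)).
Proof.
move=> sg sh x hx; rewrite /fadd !diracRE -big_split /=.
by apply: eq_bigr => j _; rewrite pd_add // rgen_add.
Qed.
Lemma diracL_scale r g : smooth 1 g -> eq_on (diracL (fscale r g)) (fscale r (diracL g)).
Proof.
move=> sg x hx; rewrite /fscale !diracLE cl_scale_sum.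
by apply: eq_bigr => j _; rewrite pd_scale // lgen_scale.
Qed.
Lemma diracR_scale r g : smooth 1 g -> eq_on (diracR (fscale r g)) (fscale r (diracR g)).
Proof.
move=> sg x hx; rewrite /fscale !diracRE cl_scale_sum.
by apply: eq_bigr => j _; rewrite pd_scale // rgen_scale.
Qed.
Lemma diracL0 x : diracL f0 x = cl0 m.
Proof. by rewrite diracLE big1 // => j _; rewrite pd_f0 lgen0. Qed.
Lemma diracR0 x : diracR f0 x = cl0 m.
Proof. by rewrite diracRE big1 // => j _; rewrite pd_f0 rgen0. Qed.

Lemma lap_add g h : smooth 2 g -> smooth 2 h -> eq_on (lap (fadd g h)) (fadd (lap g) (lap h)).
Proof.
move=> sg sh x hx; rewrite /fadd !lapE -big_split /=; apply: eq_bigr => j _.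
have pd_sum : eq_on (pd j (fadd g h)) (fadd (pd j g) (pd j h)).
  by move=> y hy; rewrite pd_add //; [exact: smooth1 sg | exact: smooth1 sh].
by rewrite (pd_local j pd_sum hx) pd_add //; exact: smooth_pd.
Qed.
Lemma lap_scale r g : smooth 2 g -> eq_on (lap (fscale r g)) (fscale r (lap g)).
Proof.
move=> sg x hx; rewrite /fscale !lapE cl_scale_sum; apply: eq_bigr => j _.
have pd_sc : eq_on (pd j (fscale r g)) (fscale r (pd j g)).
  by move=> y hy; rewrite pd_scale //; exact: smooth1 sg.
by rewrite (pd_local j pd_sc hx) pd_scale //; exact: smooth_pd.
Qed.
Lemma lap0 x : lap f0 x = cl0 m.
Proof.
rewrite lapE big1 // => j _.
have -> : pd j f0 = f0 by apply: functional_extensionality => y; rewrite pd_f0.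
exact: pd_f0.
Qed.

Lemma diracL_f_x g : smooth 1 g -> eq_on (diracL (f_x g)) (fadd (f_x (diracL g)) (fsandwich g)).
Proof.
move=> sg x hx; rewrite /fadd /fsandwich f_xE !diracLE.
under eq_bigr => j _ do rewrite pd_f_x // lgen_add lgen_rmul_vec.
by rewrite big_split /= -rmul_vec_sum -sandwich_lr cl_addC.
Qed.

Lemma diracR_x_f g : smooth 1 g -> eq_on (diracR (x_f g)) (fadd (x_f (diracR g)) (fsandwich g)).
Proof.
move=> sg x hx; rewrite /fadd /fsandwich x_fE !diracRE.
under eq_bigr => j _ do rewrite pd_x_f // rgen_add rgen_lmul_vec.
by rewrite big_split /= -lmul_vec_sum -sandwich_rl cl_addC.
Qed.

Lemma diracL_sandwich g : smooth 1 g ->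
  eq_on (fadd (diracL (fsandwich g)) (fsandwich (diracL g))) (fscale (-2) (diracR g)).
Proof.
move=> sg x hx; rewrite /fadd /fsandwich /fscale !diracLE diracRE sandwich_sum.
rewrite -big_split /= cl_scale_sum.
by apply: eq_bigr => j _; rewrite pd_fsandwich // lgen_sandwich.
Qed.

Lemma diracR_sandwich g : smooth 1 g ->
  eq_on (fadd (diracR (fsandwich g)) (fsandwich (diracR g))) (fscale (-2) (diracL g)).
Proof.
move=> sg x hx; rewrite /fadd /fsandwich /fscale !diracRE diracLE sandwich_sum.
rewrite -big_split /= cl_scale_sum.
by apply: eq_bigr => j _; rewrite pd_fsandwich // rgen_sandwich.
Qed.

Lemma lap_f_x g : smooth 2 g -> eq_on (lap (f_x g)) (fadd (f_x (lap g)) (fscale 2 (diracR g))).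
Proof.
move=> sg x hx; rewrite /fadd /fscale f_xE !lapE diracRE rmul_vec_sum cl_scale_sum.
rewrite -big_split /=; apply: eq_bigr => j _.
have pd_prod : eq_on (pd j (f_x g)) (fadd (frgen j g) (f_x (pd j g))).
  by move=> y hy; rewrite /fadd (f_xE (pd j g) y) pd_f_x //; exact: smooth1 sg.
have s1 : smooth 1 (pd j g) by exact: smooth_pd.
rewrite (pd_local j pd_prod hx) pd_add //; first last.
- by apply: smooth_f_x.
- by apply/smooth_frgen/smooth1/sg.
by rewrite pd_frgen ?pd_f_x //; [cl_ring | exact: smooth1 sg].
Qed.

Lemma lap_x_f g : smooth 2 g -> eq_on (lap (x_f g)) (fadd (x_f (lap g)) (fscale 2 (diracL g))).
Proof.
move=> sg x hx; rewrite /fadd /fscale x_fE !lapE diracLE lmul_vec_sum cl_scale_sum.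
rewrite -big_split /=; apply: eq_bigr => j _.
have pd_prod : eq_on (pd j (x_f g)) (fadd (flgen j g) (x_f (pd j g))).
  by move=> y hy; rewrite /fadd (x_fE (pd j g) y) pd_x_f //; exact: smooth1 sg.
have s1 : smooth 1 (pd j g) by exact: smooth_pd.
rewrite (pd_local j pd_prod hx) pd_add //; first last.
- by apply: smooth_x_f.
- by apply/smooth_flgen/smooth1/sg.
by rewrite pd_flgen ?pd_x_f //; [cl_ring | exact: smooth1 sg].
Qed.

Lemma lap_sandwich g : smooth 2 g -> eq_on (lap (fsandwich g)) (fsandwich (lap g)).
Proof.
move=> sg x hx; rewrite /fsandwich !lapE sandwich_sum; apply: eq_bigr => j _.
have pd_T : eq_on (pd j (fsandwich g)) (fsandwich (pd j g)).
  by move=> y hy; rewrite pd_fsandwich //; exact: smooth1 sg.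
by rewrite (pd_local j pd_T hx) pd_fsandwich //; exact: smooth_pd.
Qed.

Definition pd_sym g x := forall i j, pd i (pd j g) x = pd j (pd i g) x.

Section SymmetricSecondPartials.
Variables (g : F) (x : point m).
Hypotheses (hx : Om x) (sg : smooth 2 g) (symg : pd_sym g x).

Lemma diracL_diracL : diracL (diracL g) x = cl_scale (-1) (lap g x).
Proof.
rewrite diracLE lapE.
transitivity (\csum_(i) \csum_(j) lgen i (lgen j (pd i (pd j g) x))).
  by apply: eq_bigr => i _; rewrite pd_diracL // lgen_sum.
exact: (@lgen_sym_sum _ (fun i j => pd i (pd j g) x)).
Qed.

Lemma diracR_diracR : diracR (diracR g) x = cl_scale (-1) (lap g x).
Proof.
rewrite diracRE lapE.
transitivity (\csum_(i) \csum_(j) rgen i (rgen j (pd i (pd j g) x))).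
  by apply: eq_bigr => i _; rewrite pd_diracR // rgen_sum.
exact: (@rgen_sym_sum _ (fun i j => pd i (pd j g) x)).
Qed.

Lemma diracL_diracR : diracL (diracR g) x = diracR (diracL g) x.
Proof.
rewrite diracLE diracRE.
under eq_bigr => i _ do rewrite pd_diracR // lgen_sum.
under [RHS]eq_bigr => i _ do rewrite pd_diracL // rgen_sum.
rewrite exchange_big; apply: eq_bigr => j _; apply: eq_bigr => i _.
by rewrite lgen_rgen symg.
Qed.

Lemma lap_diracL2 : lap g x = cl_scale (-1) (diracL (diracL g) x).
Proof. by rewrite diracL_diracL cl_scaleA; cl_ring. Qed.

Lemma lap_diracR2 : lap g x = cl_scale (-1) (diracR (diracR g) x).
Proof. by rewrite diracR_diracR cl_scaleA; cl_ring. Qed.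
End SymmetricSecondPartials.

Lemma pd_sym_diracL g x : Om x -> smooth 3 g ->
  (forall k, pd_sym (pd k g) x) -> pd_sym (diracL g) x.
Proof.
move=> hx sg symg i j.
have pd_D k : eq_on (pd k (diracL g)) (fsum (index_enum 'I_m) (fun l => flgen l (pd k (pd l g)))).
  by move=> y hy; rewrite pd_diracL //; exact: smoothS.
have s1 k l : smooth 1 (flgen l (pd k (pd l g))) by apply/smooth_flgen/smooth_pd/smooth_pd.
rewrite (pd_local _ (pd_D j) hx) (pd_local _ (pd_D i) hx) !pd_fsum //.
by apply: eq_bigr => l _; rewrite !pd_flgen ?(symg l i j) //; do 2 apply: smooth_pd.
Qed.

Lemma pd_sym_diracR g x : Om x -> smooth 3 g ->
  (forall k, pd_sym (pd k g) x) -> pd_sym (diracR g) x.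
Proof.
move=> hx sg symg i j.
have pd_D k : eq_on (pd k (diracR g)) (fsum (index_enum 'I_m) (fun l => frgen l (pd k (pd l g)))).
  by move=> y hy; rewrite pd_diracR //; exact: smoothS.
have s1 k l : smooth 1 (frgen l (pd k (pd l g))) by apply/smooth_frgen/smooth_pd/smooth_pd.
rewrite (pd_local _ (pd_D j) hx) (pd_local _ (pd_D i) hx) !pd_fsum //.
by apply: eq_bigr => l _; rewrite !pd_frgen ?(symg l i j) //; do 2 apply: smooth_pd.
Qed.

Lemma pd_sym_lap g x : Om x -> smooth 4 g ->
  (forall k, pd_sym (pd k (pd k g)) x) -> pd_sym (lap g) x.
Proof.
move=> hx sg symg i j.
have pd_L k : eq_on (pd k (lap g)) (fsum (index_enum 'I_m) (fun l => pd k (pd l (pd l g)))).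
  move=> y hy; rewrite lap_fsum pd_fsum // => l.
  by do 2 apply: smooth_pd; exact: smoothS.
have s1 k l : smooth 1 (pd k (pd l (pd l g))) by do 3 apply: smooth_pd.
rewrite (pd_local _ (pd_L j) hx) (pd_local _ (pd_L i) hx) !pd_fsum //.
by apply: eq_bigr => l _; rewrite (symg l i j).
Qed.

Lemma upd_eq x k t : upd x k t k = t.
Proof. by rewrite /upd eqxx. Qed.

Lemma upd_upd x k s t : upd (upd x k s) k t = upd x k t.
Proof. by apply: functional_extensionality => l; rewrite /upd; case: (l == k). Qed.

Lemma upd_comm x k l s t : k != l -> upd (upd x k s) l t = upd (upd x l t) k s.
Proof.
move=> hkl; apply: functional_extensionality => z; rewrite /upd.
case: (eqVneq z l) => [->|hzl]; first by rewrite eq_sym (negPf hkl).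
by case: (z == k).
Qed.

Lemma derivable_pt_lim_shift (phi : R -> R) c t l :
  derivable_pt_lim phi (c + t) l -> derivable_pt_lim (fun s => phi (c + s)) t l.
Proof.
move=> H.
have hc : derivable_pt_lim (fun s => c + s) t 1.
  have := derivable_pt_lim_plus _ _ t _ _ (derivable_pt_lim_const c t) (derivable_pt_lim_id t).
  by rewrite Rplus_0_l; apply: derivable_pt_lim_ext => z; rewrite /plus_fct /fct_cte.
by have := derivable_pt_lim_comp _ _ _ _ _ hc H; rewrite Rmult_1_r.
Qed.

Definition corner x i j s t := upd (upd x i (x i + s)) j (x j + t).

Lemma corner_swap x i j s t : i != j -> corner x j i t s = corner x i j s t.
Proof. by move=> hij; rewrite /corner upd_comm // eq_sym. Qed.

Lemma corner_near x i j s t d l :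
  0 <= s <= d -> 0 <= t <= d -> Rabs (corner x i j s t l - x l) <= d.
Proof.
move=> hs ht; rewrite /corner /upd.
case: eqP => [->|_]; first by rewrite Rabs_right; lra.
case: eqP => [->|_]; first by rewrite Rabs_right; lra.
by rewrite Rminus_diag Rabs_R0; lra.
Qed.

Lemma second_difference_mvt (u ui uji : point m -> R) x i j d :
  i != j -> 0 < d ->
  (forall s t, 0 <= s <= d -> 0 <= t <= d -> Om (corner x i j s t)) ->
  (forall y, Om y -> derivable_pt_lim (fun tau => u (upd y i tau)) (y i) (ui y)) ->
  (forall y, Om y -> derivable_pt_lim (fun tau => ui (upd y j tau)) (y j) (uji y)) ->
  exists s t, 0 < s < d /\ 0 < t < d /\
    u (corner x i j d d) - u (corner x i j d 0) - u (corner x i j 0 d) + u (corner x i j 0 0)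
    = d * d * uji (corner x i j s t).
Proof.
move=> hij hd inOm Hi Hj.
have corner_ji s t : corner x i j s t = upd (upd x j (x j + t)) i (x i + s).
  by rewrite /corner upd_comm.
(* a s = u (s, d) - u (s, 0); the MVT in s gives a d - a 0 = d a' s1. *)
pose a s := u (corner x i j s d) - u (corner x i j s 0).
pose a' s := ui (corner x i j s d) - ui (corner x i j s 0).
have Da s : 0 <= s <= d -> derivable_pt_lim a s (a' s).
  move=> hs.
  have Du t : 0 <= t <= d ->
      derivable_pt_lim (fun s0 => u (corner x i j s0 t)) s (ui (corner x i j s t)).
    move=> ht; have := Hi _ (inOm s t hs ht).
    rewrite corner_ji upd_eq => /derivable_pt_lim_shift.
    by apply: derivable_pt_lim_ext => z; rewrite upd_upd corner_ji.
  have := derivable_pt_lim_minus _ _ _ _ _ (Du d (conj (Rlt_le _ _ hd) (Rle_refl _)))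
    (Du 0 (conj (Rle_refl 0) (Rlt_le _ _ hd))).
  by apply: derivable_pt_lim_ext => z; rewrite /minus_fct /a.
have [s1 [Es1 Hs1]] := MVT_cor2 a a' 0 d hd Da.
have hs1 : 0 <= s1 <= d by lra.
(* a' s1 = b d - b 0, and the MVT in t gives b d - b 0 = d b' t1. *)
pose b t := ui (corner x i j s1 t).
have Db t : 0 <= t <= d -> derivable_pt_lim b t (uji (corner x i j s1 t)).
  move=> ht; have := Hj _ (inOm s1 t hs1 ht).
  rewrite /corner upd_eq => /derivable_pt_lim_shift.
  by apply: derivable_pt_lim_ext => z; rewrite /b /corner upd_upd.
have [t1 [Et1 Ht1]] := MVT_cor2 b (fun t => uji (corner x i j s1 t)) 0 d hd Db.
exists s1, t1; do 2 split => //.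
have : a d - a 0 = d * d * uji (corner x i j s1 t1).
  by rewrite Es1 /a' -/(b d) -/(b 0) Et1; ring.
by rewrite /a; lra.
Qed.

Definition second_difference h C x i j d :=
  h (corner x i j d d) C - h (corner x i j d 0) C - h (corner x i j 0 d) C
  + h (corner x i j 0 0) C.

Lemma second_difference_swap h C x i j d :
  i != j -> second_difference h C x j i d = second_difference h C x i j d.
Proof. by move=> hij; rewrite /second_difference !(corner_swap x _ _ hij); ring. Qed.

Lemma second_difference_approx h C x i j e : Om x -> smooth 2 h -> i != j ->
  cont_at_Rm (fun y => pd j (pd i h) y C) x -> 0 < e ->
  exists d0, 0 < d0 /\ forall d, 0 < d < d0 ->
    Rabs (second_difference h C x i j d - d * d * pd j (pd i h) x C) < d * d * e.
Proof.
move=> hx sh hij cont he.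
case: (HO hx) => r [hr ballOm]; case: (cont e he) => delta [hdelta near].
exists (Rmin delta r); split => [|d hd]; first exact: Rmin_pos.
have [hdr hddelta] : d < r /\ d < delta.
  by split; apply: Rlt_le_trans (proj2 hd) _; [exact: Rmin_r | exact: Rmin_l].
have inOm s t : 0 <= s <= d -> 0 <= t <= d -> Om (corner x i j s t).
  by move=> hs ht; apply: ballOm => l; have := corner_near x i j l hs ht; lra.
have [s [t [hs [ht mvt]]]] := second_difference_mvt (u := fun y => h y C)
  (ui := fun y => pd i h y C) (uji := fun y => pd j (pd i h) y C) hij (proj1 hd) inOm
  (fun y hy => sh.1 i y C hy) (fun y hy => (sh.2 i).1 j y C hy).
rewrite /second_difference mvt -Rmult_minus_distr_l Rabs_mult.
rewrite Rabs_right; last by apply: Rle_ge; apply: Rmult_le_pos; lra.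
apply: Rmult_lt_compat_l; first by apply: Rmult_lt_0_compat; lra.
apply: near => l; have := corner_near x i j l (s := s) (t := t) (d := d); lra.
Qed.

(* Schwarz's theorem: if both mixed partials of h are continuous at x, they
   agree there, being limits of the same normalized second difference. *)
Lemma schwarz h x i j C : Om x -> smooth 2 h ->
  cont_at_Rm (fun y => pd j (pd i h) y C) x -> cont_at_Rm (fun y => pd i (pd j h) y C) x ->
  pd j (pd i h) x C = pd i (pd j h) x C.
Proof.
move=> hx sh cij cji; case: (eqVneq i j) => [-> //|hij].
set v1 := pd j (pd i h) x C; set v2 := pd i (pd j h) x C.
case: (Req_dec v1 v2) => // hne; exfalso.
set e := Rabs (v1 - v2) / 2.
have he : 0 < e.
  have : 0 < Rabs (v1 - v2) by apply: Rabs_pos_lt; lra.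
  by rewrite /e; lra.
have hji : j != i by rewrite eq_sym.
have [d1 [hd1 approx1]] := second_difference_approx hx sh hij cij he.
have [d2 [hd2 approx2]] := second_difference_approx hx sh hji cji he.
set d := Rmin d1 d2 / 2.
have hm1 := Rmin_l d1 d2; have hm2 := Rmin_r d1 d2; have hm0 := Rmin_pos _ _ hd1 hd2.
have hdd1 : 0 < d < d1 by rewrite /d; lra.
have hdd2 : 0 < d < d2 by rewrite /d; lra.
have := approx1 d hdd1; have := approx2 d hdd2.
rewrite second_difference_swap // -/v1 -/v2.
set sd := second_difference h C x i j d => A2 A1.
have hdd : 0 < d * d by apply: Rmult_lt_0_compat; lra.
have key : Rabs (d * d * (v1 - v2)) < d * d * (2 * e).
  have -> : d * d * (v1 - v2) = - (sd - d * d * v1) + (sd - d * d * v2) by ring.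
  by apply: Rle_lt_trans (Rabs_triang _ _) _; rewrite Rabs_Ropp; lra.
rewrite Rabs_mult (Rabs_right (d * d)) in key; last by lra.
by rewrite /e in key; lra.
Qed.

Lemma diracL2_f_x g : smooth 2 g ->
  eq_on (diracL (diracL (f_x g))) (fadd (f_x (diracL (diracL g))) (fscale (-2) (diracR g))).
Proof.
move=> sg x hx.
have sg1 := smooth1 sg; have sDg : smooth 1 (diracL g) by exact: smooth_diracL.
rewrite (diracL_local (diracL_f_x sg1)) // diracL_add //; last first.
- exact: smooth_fsandwich.
- exact: smooth_f_x.
rewrite /fadd (diracL_f_x sDg) // -(diracL_sandwich sg1 hx) /fadd; cl_ring.
Qed.

Lemma diracR2_x_f g : smooth 2 g ->
  eq_on (diracR (diracR (x_f g))) (fadd (x_f (diracR (diracR g))) (fscale (-2) (diracL g))).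
Proof.
move=> sg x hx.
have sg1 := smooth1 sg; have sDg : smooth 1 (diracR g) by exact: smooth_diracR.
rewrite (diracR_local (diracR_x_f sg1)) // diracR_add //; last first.
- exact: smooth_fsandwich.
- exact: smooth_x_f.
rewrite /fadd (diracR_x_f sDg) // -(diracR_sandwich sg1 hx) /fadd; cl_ring.
Qed.

Lemma diracL3_f_x g x : smooth 3 g -> Om x ->
  diracL (diracL (diracL (f_x g))) x
  = cl_add (cl_add (f_x (diracL (diracL (diracL g))) x) (sandwich (diracL (diracL g) x)))
           (cl_scale (-2) (diracL (diracR g) x)).
Proof.
move=> sg hx.
have sDDg : smooth 1 (diracL (diracL g)) by do 2 apply: smooth_diracL.
have sDRg : smooth 1 (diracR g) by exact: smooth_diracR (smoothS sg).
rewrite (diracL_local (diracL2_f_x (smoothS sg))) // diracL_add //; last first.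
- exact: smooth_scale.
- exact: smooth_f_x.
by rewrite /fadd (diracL_f_x sDDg) // diracL_scale.
Qed.

Lemma diracR3_x_f g x : smooth 3 g -> Om x ->
  diracR (diracR (diracR (x_f g))) x
  = cl_add (cl_add (x_f (diracR (diracR (diracR g))) x) (sandwich (diracR (diracR g) x)))
           (cl_scale (-2) (diracR (diracL g) x)).
Proof.
move=> sg hx.
have sDDg : smooth 1 (diracR (diracR g)) by do 2 apply: smooth_diracR.
have sDLg : smooth 1 (diracL g) by exact: smooth_diracL (smoothS sg).
rewrite (diracR_local (diracR2_x_f (smoothS sg))) // diracR_add //; last first.
- exact: smooth_scale.
- exact: smooth_x_f.
by rewrite /fadd (diracR_x_f sDDg) // diracR_scale.
Qed.

Lemma lap_x_f_x g : smooth 2 g -> eq_on (lap (f_x (x_f g)))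
  (fadd (fadd (fadd (f_x (x_f (lap g))) (fscale 2 (f_x (diracL g))))
              (fscale 2 (x_f (diracR g)))) (fscale 2 (fsandwich g))).
Proof.
move=> sg y hy.
rewrite (lap_f_x (smooth_x_f sg) hy) /fadd /fscale !f_xE (lap_x_f sg hy) /fadd /fscale.
rewrite (diracR_x_f (smooth1 sg) hy) /fadd /fsandwich rmul_vec_add rmul_vec_scale.
by rewrite !x_fE; cl_ring.
Qed.

Lemma lap2_x_f_x g x : smooth 4 g -> Om x ->
  lap (lap (f_x (x_f g))) x =
  cl_add (cl_add (cl_add (cl_add (cl_add (cl_add
    (f_x (x_f (lap (lap g))) x)
    (cl_scale 2 (f_x (diracL (lap g)) x)))
    (cl_scale 2 (x_f (diracR (lap g)) x)))
    (cl_scale 2 (fsandwich (lap g) x)))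
    (cl_scale 2 (cl_add (f_x (lap (diracL g)) x) (cl_scale 2 (diracR (diracL g) x)))))
    (cl_scale 2 (cl_add (x_f (lap (diracR g)) x) (cl_scale 2 (diracL (diracR g) x)))))
    (cl_scale 2 (fsandwich (lap g) x)).
Proof.
move=> sg hx.
have s2 := smooth_le (isT : (2 <= 4)%N) sg.
have sLg : smooth 2 (lap g) by exact: smooth_lap.
have sDLg : smooth 2 (diracL g) by exact: smooth_diracL (smoothS sg).
have sDRg : smooth 2 (diracR g) by exact: smooth_diracR (smoothS sg).
have sA : smooth 2 (f_x (x_f (lap g))) by exact/smooth_f_x/smooth_x_f.
have sB : smooth 2 (fscale 2 (f_x (diracL g))) by exact/smooth_scale/smooth_f_x.
have sC : smooth 2 (fscale 2 (x_f (diracR g))) by exact/smooth_scale/smooth_x_f.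
have sD : smooth 2 (fscale 2 (fsandwich g)) by exact/smooth_scale/smooth_fsandwich.
have sAB := smooth_add sA sB; have sABC := smooth_add sAB sC.
rewrite (lap_local (lap_x_f_x s2)) // lap_add // /fadd lap_add // /fadd lap_add // /fadd.
rewrite (lap_x_f_x sLg hx) /fadd /fscale.
rewrite lap_scale //; last exact: smooth_f_x.
rewrite lap_scale //; last exact: smooth_x_f.
rewrite lap_scale //; last exact: smooth_fsandwich.
by rewrite /fscale (lap_f_x sDLg hx) (lap_x_f sDRg hx) (lap_sandwich s2 hx).
Qed.

Lemma vanishes_on_eq_on g : vanishes_on Om g <-> eq_on g f0.
Proof.
split => H x hx; last by rewrite H.
by apply: functional_extensionality => C; exact: H.
Qed.

Lemma vanishes_on_scale r g h : r <> 0 ->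
  (forall x, Om x -> g x = cl_scale r (h x)) -> vanishes_on Om g <-> vanishes_on Om h.
Proof.
move=> hr e; split => van x hx C; have := van x hx C; rewrite ?e // /cl_scale.
  by case/Rmult_integral.
by move=> ->; rewrite Rmult_0_r.
Qed.

Lemma vanishes_on_sandwich (Hm : odd m) r g h : r <> 0 ->
  (forall x, Om x -> g x = cl_scale r (sandwich (h x))) -> vanishes_on Om g <-> vanishes_on Om h.
Proof.
move=> hr e; rewrite (vanishes_on_scale hr e); split => van x hx.
  exact: (sandwich_inj Hm (van x hx)).
by move=> C; rewrite sandwichE van // Rmult_0_l.
Qed.

Section Theorem11.
Variables (f : F) (Hf : Ck 4 Om f).

Lemma smooth_pds n l : (size l + n <= 4)%N -> smooth n (pds l f).
Proof.
elim: n l => [|n IH] l hl //=; split => [j x C hx|j].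
  by apply: (Hf.1 l j C x) => //; apply: leq_trans hl; rewrite addnS ltnS leq_addr.
by apply: (IH (j :: l)); rewrite /= addSn -addnS.
Qed.

Lemma smooth_f : smooth 4 f.
Proof. exact: (smooth_pds (l := [::])). Qed.

Lemma pd_sym_pds l x : (size l <= 2)%N -> Om x -> pd_sym (pds l f) x.
Proof.
move=> hl hx i j; apply: functional_extensionality => C.
apply: (schwarz (i := j) (j := i)) => //; first by apply: smooth_pds; rewrite addn2.
- by apply: (Hf.2 (i :: j :: l)) => //=; rewrite !ltnS.
- by apply: (Hf.2 (j :: i :: l)) => //=; rewrite !ltnS.
Qed.

Lemma pd_sym_f x : Om x -> pd_sym f x.
Proof. exact: (pd_sym_pds (l := [::])). Qed.

Lemma pd_sym_diracL_f x : Om x -> pd_sym (diracL f) x.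
Proof.
move=> hx; apply: pd_sym_diracL => // [|k]; first exact: smoothS smooth_f.
exact: (pd_sym_pds (l := [:: k])).
Qed.

Lemma pd_sym_diracR_f x : Om x -> pd_sym (diracR f) x.
Proof.
move=> hx; apply: pd_sym_diracR => // [|k]; first exact: smoothS smooth_f.
exact: (pd_sym_pds (l := [:: k])).
Qed.

Lemma pd_sym_lap_f x : Om x -> pd_sym (lap f) x.
Proof.
move=> hx; apply: pd_sym_lap => // [|k]; first exact: smooth_f.
exact: (pd_sym_pds (l := [:: k; k])).
Qed.

Lemma smooth_f3 : smooth 3 f. Proof. exact: smoothS smooth_f. Qed.
Lemma smooth_f2 : smooth 2 f. Proof. exact: smoothS smooth_f3. Qed.

Lemma inframonogenic_iff : inframonogenic Om f <-> vanishes_on Om (diracL (diracR f)).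
Proof.
suff expr x : Om x -> (fun C => \big[Rplus/0]_(i : 'I_m) \big[Rplus/0]_(j : 'I_m)
    clmul (clmul (gen i) (pd i (pd j f) x)) (gen j) C) = diracL (diracR f) x.
  by split => H x hx; [rewrite -expr // | rewrite expr //]; apply: H.
move=> hx; apply: functional_extensionality => C; rewrite diracLE cl_sumE.
apply: eq_bigr => i _; rewrite pd_diracR // ?lgen_sum ?cl_sumE; last exact: smooth_f2.
by apply: eq_bigr => j _; rewrite lgen_rgen.
Qed.

Lemma diracL_diracL_f x : Om x -> diracL (diracL f) x = cl_scale (-1) (lap f x).
Proof. by move=> hx; apply: diracL_diracL => //; [exact: smooth_f2 | exact: pd_sym_f]. Qed.
Lemma diracR_diracR_f x : Om x -> diracR (diracR f) x = cl_scale (-1) (lap f x).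
Proof. by move=> hx; apply: diracR_diracR => //; [exact: smooth_f2 | exact: pd_sym_f]. Qed.
Lemma diracL_diracR_f x : Om x -> diracL (diracR f) x = diracR (diracL f) x.
Proof. by move=> hx; apply: diracL_diracR => //; [exact: smooth_f2 | exact: pd_sym_f]. Qed.

Lemma diracL3_f x : Om x -> diracL (diracL (diracL f)) x = cl_scale (-1) (diracL (lap f) x).
Proof.
move=> hx; rewrite (diracL_local (g := diracL (diracL f)) (h := fscale (-1) (lap f))) //.
  by rewrite diracL_scale //; exact/smooth1/smooth_lap/smooth_f.
by move=> y hy; rewrite diracL_diracL_f.
Qed.

Lemma diracR3_f x : Om x -> diracR (diracR (diracR f)) x = cl_scale (-1) (diracR (lap f) x).
Proof.
move=> hx; rewrite (diracR_local (g := diracR (diracR f)) (h := fscale (-1) (lap f))) //.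
  by rewrite diracR_scale //; exact/smooth1/smooth_lap/smooth_f.
by move=> y hy; rewrite diracR_diracR_f.
Qed.

Section Harmonic.
Hypothesis harm : eq_on (lap f) f0.

(* d^2 f = - Lap f = 0, so d^3 f = 0; likewise on the right. *)
Lemma harmonic_diracL2 x : Om x -> diracL (diracL f) x = cl0 m.
Proof. by move=> hx; rewrite diracL_diracL_f // harm // /f0; cl_ring. Qed.
Lemma harmonic_diracR2 x : Om x -> diracR (diracR f) x = cl0 m.
Proof. by move=> hx; rewrite diracR_diracR_f // harm // /f0; cl_ring. Qed.
Lemma harmonic_diracL3 x : Om x -> diracL (diracL (diracL f)) x = cl0 m.
Proof. by move=> hx; rewrite diracL3_f // (diracL_local harm) // diracL0; cl_ring. Qed.
Lemma harmonic_diracR3 x : Om x -> diracR (diracR (diracR f)) x = cl0 m.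
Proof. by move=> hx; rewrite diracR3_f // (diracR_local harm) // diracR0; cl_ring. Qed.

Lemma harmonic_cond_i x : Om x ->
  diracL (diracL (diracL (f_x f))) x = cl_scale (-2) (diracL (diracR f) x).
Proof.
move=> hx; rewrite (diracL3_f_x smooth_f3 hx) f_xE harmonic_diracL3 // harmonic_diracL2 //.
by rewrite rmul_vec0 sandwich0; cl_ring.
Qed.

Lemma harmonic_cond_ii x : Om x ->
  diracR (diracR (diracR (x_f f))) x = cl_scale (-2) (diracL (diracR f) x).
Proof.
move=> hx; rewrite (diracR3_x_f smooth_f3 hx) x_fE harmonic_diracR3 // harmonic_diracR2 //.
by rewrite lmul_vec0 sandwich0 diracL_diracR_f //; cl_ring.
Qed.

Lemma harmonic_cond_iii x : Om x ->
  lap (lap (f_x (x_f f))) x = cl_scale 8 (diracL (diracR f) x).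
Proof.
move=> hx; have sDL := smooth_diracL smooth_f3; have sDR := smooth_diracR smooth_f3.
have e1 : lap (lap f) x = cl0 m by rewrite (lap_local harm) // lap0.
have e2 : diracL (lap f) x = cl0 m by rewrite (diracL_local harm) // diracL0.
have e3 : diracR (lap f) x = cl0 m by rewrite (diracR_local harm) // diracR0.
have e4 : fsandwich (lap f) x = cl0 m by rewrite /fsandwich harm // sandwich0.
have e5 : lap (diracL f) x = cl0 m.
  by rewrite (lap_diracL2 hx sDL (pd_sym_diracL_f hx)) harmonic_diracL3 //; cl_ring.
have e6 : lap (diracR f) x = cl0 m.
  by rewrite (lap_diracR2 hx sDR (pd_sym_diracR_f hx)) harmonic_diracR3 //; cl_ring.
rewrite (lap2_x_f_x smooth_f hx) !f_xE !x_fE e1 e2 e3 e4 e5 e6.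
by rewrite lmul_vec0 !rmul_vec0 -diracL_diracR_f //; cl_ring.
Qed.

Lemma harmonic_conditions :
  (vanishes_on Om (diracL (diracR f)) <-> cond_i Om f) /\
  (vanishes_on Om (diracL (diracR f)) <-> cond_ii Om f) /\
  (vanishes_on Om (diracL (diracR f)) <-> cond_iii Om f).
Proof.
split; [|split]; apply: iff_sym.
- by apply: (vanishes_on_scale (r := -2)); [lra | exact: harmonic_cond_i].
- by apply: (vanishes_on_scale (r := -2)); [lra | exact: harmonic_cond_ii].
- by apply: (vanishes_on_scale (r := 8)); [lra | exact: harmonic_cond_iii].
Qed.
End Harmonic.

Section Inframonogenic.
Hypothesis infra : eq_on (diracL (diracR f)) f0.

(* (d f) d = d (f d) = 0, and d Lap f = - d (f d d) = - (d f d) d = 0, and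
   symmetrically Lap f d = 0. *)
Lemma infra_diracR_diracL x : Om x -> diracR (diracL f) x = cl0 m.
Proof. by move=> hx; rewrite -diracL_diracR_f // infra. Qed.

Lemma infra_diracL_lap : eq_on (diracL (lap f)) f0.
Proof.
move=> x hx.
have lap_dR2 : eq_on (lap f) (fscale (-1) (diracR (diracR f))).
  by move=> y hy; rewrite /fscale diracR_diracR_f // cl_scaleA; cl_ring.
rewrite (diracL_local lap_dR2) // diracL_scale //;
  last exact: smooth_diracR (smooth_diracR smooth_f3).
rewrite /fscale (diracL_diracR hx (smooth_diracR smooth_f3) (pd_sym_diracR_f hx)).
by rewrite (diracR_local infra) // diracR0 /f0; cl_ring.
Qed.

Lemma infra_diracR_lap : eq_on (diracR (lap f)) f0.
Proof.
move=> x hx.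
have lap_dL2 : eq_on (lap f) (fscale (-1) (diracL (diracL f))).
  by move=> y hy; rewrite /fscale diracL_diracL_f // cl_scaleA; cl_ring.
rewrite (diracR_local lap_dL2) // diracR_scale //;
  last exact: smooth_diracL (smooth_diracL smooth_f3).
rewrite /fscale -(diracL_diracR hx (smooth_diracL smooth_f3) (pd_sym_diracL_f hx)).
by rewrite (diracL_local infra_diracR_diracL) // diracL0 /f0; cl_ring.
Qed.

Lemma infra_diracL3 x : Om x -> diracL (diracL (diracL f)) x = cl0 m.
Proof. by move=> hx; rewrite diracL3_f // infra_diracL_lap // /f0; cl_ring. Qed.
Lemma infra_diracR3 x : Om x -> diracR (diracR (diracR f)) x = cl0 m.
Proof. by move=> hx; rewrite diracR3_f // infra_diracR_lap // /f0; cl_ring. Qed.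

Lemma infra_cond_i x : Om x ->
  diracL (diracL (diracL (f_x f))) x = cl_scale (-1) (sandwich (lap f x)).
Proof.
move=> hx; rewrite (diracL3_f_x smooth_f3 hx) f_xE infra_diracL3 // infra //.
by rewrite diracL_diracL_f // rmul_vec0 sandwich_scale /f0; cl_ring.
Qed.

Lemma infra_cond_ii x : Om x ->
  diracR (diracR (diracR (x_f f))) x = cl_scale (-1) (sandwich (lap f x)).
Proof.
move=> hx; rewrite (diracR3_x_f smooth_f3 hx) x_fE infra_diracR3 // infra_diracR_diracL //.
by rewrite diracR_diracR_f // lmul_vec0 sandwich_scale; cl_ring.
Qed.

Lemma infra_cond_iii x : Om x ->
  lap (lap (f_x (x_f f))) x = cl_scale 4 (sandwich (lap f x)).
Proof.
move=> hx; have sDL := smooth_diracL smooth_f3; have sDR := smooth_diracR smooth_f3.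
have sL : smooth 2 (lap f) by exact: smooth_lap smooth_f.
have e1 : lap (lap f) x = cl0 m.
  rewrite (lap_diracL2 hx sL (pd_sym_lap_f hx)) (diracL_local infra_diracL_lap) //.
  by rewrite diracL0; cl_ring.
have e5 : lap (diracL f) x = cl0 m.
  by rewrite (lap_diracL2 hx sDL (pd_sym_diracL_f hx)) infra_diracL3 //; cl_ring.
have e6 : lap (diracR f) x = cl0 m.
  by rewrite (lap_diracR2 hx sDR (pd_sym_diracR_f hx)) infra_diracR3 //; cl_ring.
rewrite (lap2_x_f_x smooth_f hx) !f_xE !x_fE e1 e5 e6 infra_diracL_lap // infra_diracR_lap //.
by rewrite infra_diracR_diracL // infra // /f0 lmul_vec0 !rmul_vec0 /fsandwich; cl_ring.
Qed.

(* Theorem 1.1 for inframonogenic f: each condition is equivalent to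
   Lap f = 0, since T is injective in odd dimension. *)
Lemma inframonogenic_conditions (Hm : odd m) :
  (vanishes_on Om (lap f) <-> cond_i Om f) /\
  (vanishes_on Om (lap f) <-> cond_ii Om f) /\
  (vanishes_on Om (lap f) <-> cond_iii Om f).
Proof.
split; [|split]; apply: iff_sym.
- by apply: (vanishes_on_sandwich Hm (r := -1)); [lra | exact: infra_cond_i].
- by apply: (vanishes_on_sandwich Hm (r := -1)); [lra | exact: infra_cond_ii].
- by apply: (vanishes_on_sandwich Hm (r := 4)); [lra | exact: infra_cond_iii].
Qed.
End Inframonogenic.
End Theorem11.
End Analysis.

Local Close Scope R_scope.

Theorem mainTheorem11 (m : nat) (Hm : odd m) (Om : point m -> Prop)
  (f : point m -> Cl m) (HO : open_Rm Om) (Hf : Ck 4 Om f) :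
  (harmonic Om f ->
     (inframonogenic Om f <-> cond_i Om f) /\
     (inframonogenic Om f <-> cond_ii Om f) /\
     (inframonogenic Om f <-> cond_iii Om f)) /\
  (inframonogenic Om f ->
     (harmonic Om f <-> cond_i Om f) /\
     (harmonic Om f <-> cond_ii Om f) /\
     (harmonic Om f <-> cond_iii Om f)).
Proof.
rewrite (inframonogenic_iff HO Hf).
split=> [/vanishes_on_eq_on harm | /vanishes_on_eq_on infra].
- exact: harmonic_conditions.
- exact: inframonogenic_conditions.
Qed.
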